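(* Let $V$ be a finite set, $f:2^V\to\mathbb{R}_+$ nonnegative submodular with $f(\emptyset)=0$, $t_1,\ldots,t_k\in V$ distinct, and $\mathbf{x}=(x_{i,j})_{i\in[k],j\in V}$ with $x_{i,j}\ge0$, $\sum_{i=1}^k x_{i,j}=1$ for all $j\in V$, and $x_{i,t_i}=1$ for all $i$. For $\theta\in[0,1]$ let $A_i(\theta)=\{j: x_{i,j}>\theta\}$ and $B(\theta)=\{j: 1-\max_i x_{i,j}\ge\theta\}$. Then $$\sum_{i=1}^k\int_0^{1/2} f(A_i(\theta))\,d\theta\ \ge\ \int_0^{1/2} f(B(\theta))\,d\theta.$$ *)

From HB Require Import structures.
From mathcomp Require Import all_boot all_order all_algebra.
From mathcomp Require Import all_classical all_reals all_analysis.
Set Implicit Arguments. Unset Strict Implicit. Unset Printing Implicit Defensive.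
Import Order.TTheory GRing.Theory Num.Theory.
Local Open Scope ring_scope.

Definition submodular (R : realType) (V : finType) (f : {set V} -> R) : Prop :=
  forall A B : {set V}, f (A :|: B) + f (A :&: B) <= f A + f B.

Definition Aset (R : realType) (V : finType) (k : nat) (x : 'I_k -> V -> R)
  (i : 'I_k) (theta : R) : {set V} :=
  [set j | theta < x i j].

(* max_i x_{i,j}  (all x_{i,j} >= 0, so 0 is a harmless default) *)
Definition maxx (R : realType) (V : finType) (k : nat) (x : 'I_k -> V -> R)
  (j : V) : R := \big[Num.max/0]_(i < k) x i j.

Definition Bset (R : realType) (V : finType) (k : nat) (x : 'I_k -> V -> R)
  (theta : R) : {set V} :=
  [set j | theta <= 1 - maxx x j].

From HB Require Import structures.
From mathcomp Require Import all_boot all_order all_algebra.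
From mathcomp Require Import all_classical all_reals all_analysis.
From mathcomp Require Import lra.

(* Put u_j = 1 - max_i x_{i,j}, so that B(theta) is the level set {u >= theta}.
   Edmonds' greedy algorithm along the order of u yields a vector pi with
   pi(S) <= f(S) for every S, with equality on every level set of u; hence
   f(B(theta)) = pi(B(theta)) and the right-hand side is sum_j pi_j min(u_j, 1/2).
   Since f - pi is nonnegative and submodular, it is subadditive on unions, and
   as the A_i(theta) cover {max_i x_{i,j} > theta} and f >= 0,
   sum_i f(A_i(theta)) >= sum_i pi(A_i(theta)) - pi({max_i x_{i,j} > theta}).
   Integrated over [0, 1/2] the right side becomes
   sum_j pi_j (sum_i min(x_{i,j}, 1/2) - min(max_i x_{i,j}, 1/2)) = sum_j pi_j u_j,
   because a column of x sums to 1 and so has at most one entry above 1/2.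
   Finally sum_j pi_j (u_j - min(u_j, 1/2)) >= 0, being the Lovasz extension of
   f at (u - 1/2)^+. *)

Set Implicit Arguments. Unset Strict Implicit. Unset Printing Implicit Defensive.
Import Order.TTheory GRing.Theory Num.Theory.
Local Open Scope ring_scope.

Section level_sum.
Local Open Scope classical_set_scope.
Variables (R : realType) (h : R).
Hypothesis h_ge0 : 0 <= h.

Local Notation mu := (@lebesgue_measure R).

Definition ray (C : bool) (a : R) : set R := [set` Interval -oo%O (BSide (~~ C) a)].

Lemma in_ray C a t : (t \in ray C a) = (t < a ?<= if C).
Proof. by rewrite /ray mem_setE in_itv /=; case: C. Qed.

Lemma measurable_ray C a : measurable (ray C a).
Proof. exact: measurable_itv. Qed.

Lemma integral_ray_indic C a : 0 <= a ->
  (\int[mu]_(t in `[0%R, h]) (\1_(ray C a) t)%:E = (Num.min a h)%:E)%E.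
Proof.
move=> a_ge0; rewrite integral_indic//; last exact: measurable_ray.
have m_ge0 : 0 <= Num.min a h by rewrite le_min a_ge0 h_ge0.
have mu_itv b : mu [set` Interval (BLeft 0) (BSide b (Num.min a h))] =
    (Num.min a h)%:E.
  rewrite lebesgue_measure_itv /= lte_fin; case: ltP => [_|m_le0].
    by rewrite oppr0 adde0.
  by apply/esym/eqP; rewrite eqe eq_le m_le0 m_ge0.
have mI : measurable (ray C a `&` `[0%R, h]).
  by apply: measurableI; [exact: measurable_ray | exact: measurable_itv].
have sub_closed : ray C a `&` `[0%R, h] `<=` `[0%R, Num.min a h].
  move=> t [/mem_set]; rewrite in_ray => /lteifW ta /=.
  by rewrite !in_itv /= => /andP[-> th]; rewrite le_min ta th.
have sub_open : `[0%R, Num.min a h[ `<=` ray C a `&` `[0%R, h].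
  move=> t /=; rewrite in_itv /= lt_min => /andP[t0 /andP[ta th]]; split.
    by apply/set_mem; rewrite in_ray ltrW_lteif.
  by rewrite /= in_itv /= t0 ltW.
have m_itv b : measurable [set` Interval (BLeft 0) (BSide b (Num.min a h))].
  exact: measurable_itv.
apply/eqP; rewrite eq_le; apply/andP; split.
- rewrite -(mu_itv false).
  exact: (@le_measure _ _ _ mu _ _ (mem_set mI) (mem_set (m_itv false)) sub_closed).
- rewrite -(mu_itv true).
  exact: (@le_measure _ _ _ mu _ _ (mem_set (m_itv true)) (mem_set mI) sub_open).
Qed.

Lemma integrable_ray_indic C a : mu.-integrable `[0%R, h] (EFin \o \1_(ray C a)).
Proof.
apply: measurable_bounded_integrable; first exact: measurable_itv.
- by rewrite /= lebesgue_measure_itv /=; case: ifP; rewrite ?ltry.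
- exact: measurable_realfun.measurable_indic (measurable_ray C a).
- exists 1; split => // r r1 t _ /=; rewrite indicE.
  by case: (t \in _); rewrite ?normr1 ?normr0; lra.
Qed.

Definition level_sum {I : finType} (C : bool) (c w : I -> R) (t : R) : R :=
  \sum_(j | t < w j ?<= if C) c j.

Lemma level_sum_setE {I : finType} (C : bool) (c w : I -> R) (t : R) :
  level_sum C c w t = \sum_(j in [set j | t < w j ?<= if C]%SET) c j.
Proof. by apply: eq_bigl => j; rewrite inE. Qed.

Lemma sum_level_sum {I J : finType} (C : bool) (c : J -> R) (w : I -> J -> R) (t : R) :
  \sum_i level_sum C c (w i) t = level_sum C (fun p : I * J => c p.2) (fun p => w p.1 p.2) t.
Proof. by rewrite /level_sum pair_big_dep. Qed.

Lemma level_sum_indicE {I : finType} (C : bool) (c w : I -> R) (t : R) :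
  (level_sum C c w t)%:E = (\sum_j (c j)%:E * (\1_(ray C (w j)) t)%:E)%E.
Proof.
rewrite /level_sum big_mkcond -sumEFin; apply: eq_bigr => j _.
by rewrite -EFinM indicE in_ray; case: ifP; rewrite ?mulr1 ?mulr0.
Qed.

Let integrable_scaled_ray_indic (C : bool) (k a : R) :
  mu.-integrable `[0%R, h] (fun t => (k%:E * (\1_(ray C a) t)%:E)%E).
Proof. by apply: integrableZl; [exact: measurable_itv | exact: integrable_ray_indic]. Qed.

Lemma integrable_level_sum {I : finType} (C : bool) (c w : I -> R) :
  mu.-integrable `[0%R, h] (EFin \o level_sum C c w).
Proof.
under [_ \o _]funext => t do rewrite /= level_sum_indicE.
by apply: integrable_sum => [|j _]; [exact: measurable_itv | exact: integrable_scaled_ray_indic].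
Qed.

Lemma integral_level_sum {I : finType} (C : bool) (c w : I -> R) :
  (forall j, 0 <= w j) ->
  (\int[mu]_(t in `[0%R, h]) (level_sum C c w t)%:E =
   (\sum_j c j * Num.min (w j) h)%:E)%E.
Proof.
move=> w_ge0; under eq_integral do rewrite level_sum_indicE.
rewrite (integral_sum _ (fun j => integrable_scaled_ray_indic C (c j) (w j))); last exact: measurable_itv.
rewrite -sumEFin; apply: eq_bigr => j _.
by rewrite integralZl ?integral_ray_indic //; exact: integrable_ray_indic.
Qed.
End level_sum.

Section greedy.
Variables (R : realType) (V : finType) (f : {set V} -> R).
Hypothesis f_ge0 : forall S, 0 <= f S.
Hypothesis f_set0 : f finset.set0 = 0.
Hypothesis f_submod : submodular f.
Variable w : V -> R.

Definition upper_closed (T S : {set V}) : Prop :=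
  forall a b, a \in S -> b \in T -> w a <= w b -> b \in S.

Definition greedy_vector (T : {set V}) (pi : V -> R) : Prop :=
  [/\ forall S : {set V}, S \subset T -> \sum_(j in S) pi j <= f S,
      forall S : {set V}, S \subset T -> upper_closed T S -> \sum_(j in S) pi j = f S &
      (* the Lovasz extension of f at (w - c)^+ is nonnegative *)
      forall c, 0 <= \sum_(j in T) pi j * (w j - Num.min (w j) c)].

Lemma greedy_vector_set0 : greedy_vector finset.set0 (fun=> 0).
Proof.
split=> [S _|S|c]; rewrite ?big_set0 //; first by rewrite big1.
by rewrite finset.subset0 => /eqP -> _; rewrite big_set0.
Qed.

(* One step of Edmonds' greedy algorithm: the w-smallest element j of T gets
   the marginal value of adding it last. *)
Definition greedy_extend (T : {set V}) (j : V) (pi : V -> R) (a : V) : R :=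
  if a == j then f T - f (T :\ j) else pi a.

Section extension.
Variables (T : {set V}) (j : V) (pi : V -> R).
Hypotheses (jT : j \in T) (j_min : forall b, b \in T -> w j <= w b).
Hypothesis pi_greedy : greedy_vector (T :\ j) pi.

Local Notation pi' := (greedy_extend T j pi).

Let sum_pi'_notin (S : {set V}) : j \notin S -> \sum_(a in S) pi' a = \sum_(a in S) pi a.
Proof.
move=> jNS; apply: eq_bigr => a aS; rewrite /greedy_extend; case: eqP => // eaj.
by move: jNS; rewrite -eaj aS.
Qed.

Let subset_setD1 (S : {set V}) : S \subset T -> j \notin S -> S \subset T :\ j.
Proof. by move=> ST jNS; rewrite subsetD1 ST. Qed.

Let sum_pi'_T : \sum_(a in T) pi' a = f T.
Proof.
case: pi_greedy => _ tight _.
have tight_T : \sum_(a in T :\ j) pi a = f (T :\ j) by apply: tight => // a b _ ->.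
rewrite (big_setD1 j jT) /= sum_pi'_notin ?setD11 // tight_T /greedy_extend eqxx; lra.
Qed.

Let pi'_le (S : {set V}) : S \subset T -> \sum_(a in S) pi' a <= f S.
Proof.
case: pi_greedy => pi_le _ _ ST; have [jS|jNS] := boolP (j \in S); last first.
  by rewrite sum_pi'_notin // pi_le // subset_setD1.
rewrite (big_setD1 j jS) /= sum_pi'_notin ?setD11 // /greedy_extend eqxx.
have cup : S :|: T :\ j = T.
  apply/setP => a; rewrite !inE; case: (a =P j) => [->|_]; rewrite ?jS ?jT //=.
  by case aS: (a \in S); rewrite //= (fintype.subsetP ST).
have := pi_le (S :\ j) (finset.setSD _ ST); have := f_submod S (T :\ j).
rewrite cup finset.setIDA (finset.setIidPl ST); lra.
Qed.

Let pi'_tight (S : {set V}) :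
  S \subset T -> upper_closed T S -> \sum_(a in S) pi' a = f S.
Proof.
case: pi_greedy => _ tight _ ST S_up; have [jS|jNS] := boolP (j \in S).
  suff -> : S = T by exact: sum_pi'_T.
  apply/eqP; rewrite finset.eqEsubset ST; apply/fintype.subsetP => b bT.
  exact: S_up jS bT (j_min bT).
rewrite sum_pi'_notin // tight ?subset_setD1 // => a b aS /setD1P[_ bT].
exact: S_up.
Qed.

Let sum_pi'_excess_ge0 c : 0 <= \sum_(a in T) pi' a * (w a - Num.min (w a) c).
Proof.
case: pi_greedy => _ _ excess_ge0.
have sum_setD1 c' : \sum_(a in T) pi' a * (w a - Num.min (w a) c') =
    pi' j * (w j - Num.min (w j) c') + \sum_(a in T :\ j) pi a * (w a - Num.min (w a) c').
  rewrite (big_setD1 j jT) /=; congr (_ + _); apply: eq_bigr => a.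
  by rewrite !inE /greedy_extend => /andP[/negPf -> _].
have [wj_le|c_lt] := leP (w j) c.
  by rewrite sum_setD1 (min_l wj_le) subrr mulr0 add0r.
have excess_split a : a \in T ->
    w a - Num.min (w a) c = (w a - Num.min (w a) (w j)) + (w j - c).
  by move=> aT; have := j_min aT => le_ja; rewrite !min_r //; lra.
rewrite (eq_bigr (fun a => pi' a * (w a - Num.min (w a) (w j)) + pi' a * (w j - c))); last first.
  by move=> a aT; rewrite excess_split // mulrDr.
rewrite big_split /= -big_distrl /= sum_pi'_T sum_setD1 minxx subrr mulr0 add0r.
by apply: addr_ge0 => //; apply: mulr_ge0 => //; rewrite subr_ge0 ltW.
Qed.

Lemma greedy_vector_setD1 : greedy_vector T pi'.
Proof. by split; [exact: pi'_le | exact: pi'_tight | exact: sum_pi'_excess_ge0]. Qed.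
End extension.

Lemma exists_greedy_vector (T : {set V}) : exists pi, greedy_vector T pi.
Proof.
have [n] := ubnP #|T|; elim: n T => // n IH T.
have [->|[j0 j0T]] := set_0Vmem T => [_|T_lt]; first by exists (fun=> 0); exact: greedy_vector_set0.
have [j jT j_min] : exists2 j, j \in T & forall b, b \in T -> w j <= w b.
  by case: (arg_minP w j0T) => j; exists j.
have [pi pi_greedy] : exists pi, greedy_vector (T :\ j) pi.
  by apply: IH; move: T_lt; rewrite (cardsD1 j T) jT.
by exists (greedy_extend T j pi); exact: greedy_vector_setD1.
Qed.

Lemma exists_level_tight_vector :
  exists pi : V -> R,
  [/\ forall S : {set V}, \sum_(j in S) pi j <= f S,
      forall C t, f [set j | t < w j ?<= if C] = level_sum C pi w t &
      forall c, 0 <= \sum_j pi j * (w j - Num.min (w j) c)].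
Proof.
have [pi [pi_le tight excess]] := exists_greedy_vector [set: V].
exists pi; split => [S|C t|c]; first exact: pi_le (finset.subsetT S).
- rewrite level_sum_setE tight ?finset.subsetT // => a b; rewrite !inE => ta _ wab.
  by have := lteif_trans ta (wab : w a < w b ?<= if true); rewrite andbT.
- move: (excess c); rewrite [X in 0 <= X -> _](eq_bigl xpredT) => [//|j].
  exact: finset.in_setT.
Qed.
End greedy.

Section submodular_cover.
Variables (R : realType) (V : finType).

Lemma submodular_bigcup_le (g : {set V} -> R) :
  (forall S, 0 <= g S) -> g finset.set0 = 0 -> submodular g ->
  forall (I : Type) (r : seq I) (A : I -> {set V}),
  g (\bigcup_(i <- r) A i) <= \sum_(i <- r) g (A i).
Proof.
move=> g_ge0 g_set0 g_submod I; elim=> [|a r IH] A; first by rewrite !big_nil g_set0.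
rewrite !big_cons; have := g_submod (A a) (\bigcup_(i <- r) A i).
have := g_ge0 (A a :&: \bigcup_(i <- r) A i); have := IH A; lra.
Qed.

Lemma submodularB_sum (f : {set V} -> R) (pi : V -> R) :
  submodular f -> submodular (fun S => f S - \sum_(j in S) pi j).
Proof.
move=> f_submod A B.
have modular : \sum_(j in A :|: B) pi j + \sum_(j in A :&: B) pi j =
    \sum_(j in A) pi j + \sum_(j in B) pi j.
  rewrite !(big_mkcond (fun j => j \in _)) -!big_split; apply: eq_bigr => j _.
  by rewrite !inE; case: (j \in A); case: (j \in B); rewrite /= ?addr0 ?add0r.
have := f_submod A B; lra.
Qed.

Lemma sum_sub_bigcup_le (f : {set V} -> R) (pi : V -> R) :
  (forall S, 0 <= f S) -> f finset.set0 = 0 -> submodular f ->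
  (forall S : {set V}, \sum_(j in S) pi j <= f S) ->
  forall (I : Type) (r : seq I) (A : I -> {set V}),
  \sum_(i <- r) \sum_(j in A i) pi j - \sum_(j in \bigcup_(i <- r) A i) pi j <=
  \sum_(i <- r) f (A i).
Proof.
move=> f_ge0 f_set0 f_submod pi_le I r A.
have g_ge0 (S : {set V}) : 0 <= f S - \sum_(j in S) pi j by rewrite subr_ge0.
have g_set0 : f finset.set0 - \sum_(j in finset.set0) pi j = 0.
  by rewrite big_set0 f_set0 subr0.
have := submodular_bigcup_le g_ge0 g_set0 (submodularB_sum pi f_submod) r A.
rewrite big_split /= sumrN; have := f_ge0 (\bigcup_(i <- r) A i); lra.
Qed.
End submodular_cover.

Lemma sum_min_half_bigmax (R : realType) (I : finType) (y : I -> R) :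
  (forall i, 0 <= y i) -> \sum_i y i = 1 ->
  \sum_i Num.min (y i) 2^-1 =
  Num.min (\big[Num.max/0]_i y i) 2^-1 + (1 - \big[Num.max/0]_i y i).
Proof.
move=> y_ge0 y_sum1; have [/existsP[i0 y_i0]|] := boolP [exists i, 2^-1 < y i].
  have y_other l : l != i0 -> y l <= 1 - y i0.
    move=> l_i0; rewrite -y_sum1 (bigD1 i0) //= (bigD1 l) //=.
    have : 0 <= \sum_(l' | (l' != i0) && (l' != l)) y l' by apply: sumr_ge0.
    lra.
  have -> : \big[Num.max/0]_i y i = y i0.
    apply/eqP; rewrite eq_le le_bigmax andbT; apply: bigmax_le => // l _.
    by have [->|/y_other] := eqVneq l i0; lra.
  rewrite (bigD1 i0) //= (min_r (ltW y_i0)).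
  rewrite (eq_bigr y) => [|l /y_other l_le]; last by apply: min_l; lra.
  by move: y_sum1; rewrite (bigD1 i0) //=; lra.
rewrite negb_exists => /forallP y_le; have {}y_le i : y i <= 2^-1 by rewrite leNgt y_le.
rewrite (min_l (bigmax_le _ _ _)) // (eq_bigr y) => [|i _]; last exact: min_l.
by rewrite y_sum1 addrC subrK.
Qed.

Section rounding.
Variables (R : realType) (V : finType) (f : {set V} -> R).
Variables (k : nat) (x : 'I_k -> V -> R).
Hypotheses (f_ge0 : forall S, 0 <= f S) (f_set0 : f finset.set0 = 0).
Hypothesis f_submod : submodular f.
Hypotheses (x_ge0 : forall i j, 0 <= x i j) (x_sum1 : forall j, \sum_(i < k) x i j = 1).

Local Notation mu := (@lebesgue_measure R).
Local Notation half := (`[0%R, 2^-1%R]%classic).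

Let half_ge0 : (0 : R) <= 2^-1. Proof. by rewrite invr_ge0. Qed.

Lemma le_maxx i j : x i j <= maxx x j.
Proof. exact: le_bigmax. Qed.

Lemma maxx_ge0 j : 0 <= maxx x j.
Proof. exact: bigmax_ge_id. Qed.

Lemma maxx_le1 j : maxx x j <= 1.
Proof.
apply: bigmax_le => // i _; rewrite -(x_sum1 j) (bigD1 i) //= lerDl.
exact: sumr_ge0.
Qed.

Lemma lt_maxx t j : 0 <= t -> (t < maxx x j) = [exists i, t < x i j].
Proof.
move=> t_ge0; apply/idP/idP => [|/existsP[i t_lt]]; last exact: lt_le_trans t_lt (le_maxx i j).
apply: contraLR; rewrite negb_exists -leNgt => /forallP x_le.
by apply/bigmax_leP; split => // i _; rewrite leNgt.
Qed.

Lemma bigcup_Aset t : 0 <= t -> \bigcup_i Aset x i t = [set j | t < maxx x j].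
Proof.
move=> t_ge0; apply/setP => j; rewrite inE lt_maxx //.
by apply/bigcupP/existsP => [[i _]|[i t_lt]]; rewrite ?inE; exists i; rewrite ?inE.
Qed.

Lemma integrable_f_Aset i : mu.-integrable half (fun t => (f (Aset x i t))%:E).
Proof.
have [c [_ c_level _]] := exists_level_tight_vector f_ge0 f_set0 f_submod (x i).
apply: (eq_integrable _ _ _ _ (integrable_level_sum 2^-1 false c (x i))) => [|t _].
- exact: measurable_itv.
- by rewrite /= (c_level false).
Qed.

Section polyhedron_vector.
Variable pi : V -> R.
Hypothesis pi_le : forall S : {set V}, \sum_(j in S) pi j <= f S.

Lemma level_sum_Aset_le t : 0 <= t ->
  \sum_i level_sum false pi (x i) t - level_sum false pi (maxx x) t <=
  \sum_i f (Aset x i t).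
Proof.
move=> t_ge0; rewrite (level_sum_setE false pi (maxx x)) -bigcup_Aset //.
have -> : \sum_i level_sum false pi (x i) t = \sum_i \sum_(j in Aset x i t) pi j.
  by apply: eq_bigr => i _; rewrite level_sum_setE.
exact: sum_sub_bigcup_le.
Qed.

Lemma integral_level_sum_gap :
  (\int[mu]_(t in half)
      ((\sum_i level_sum false pi (x i) t)%:E - (level_sum false pi (maxx x) t)%:E) =
   (\sum_j pi j * (1 - maxx x j))%:E)%E.
Proof.
under eq_integral do rewrite sum_level_sum.
rewrite integralB_EFin; [|exact: measurable_itv|exact: integrable_level_sum..].
rewrite (integral_level_sum half_ge0); last by case=> i j; exact: x_ge0.
rewrite (integral_level_sum half_ge0); last exact: maxx_ge0.
rewrite -EFinB -(pair_bigA _ (fun i j => pi j * Num.min (x i j) 2^-1)) /= exchange_big.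
congr EFin; rewrite -sumrB; apply: eq_bigr => j _.
by rewrite -big_distrr -mulrBr (sum_min_half_bigmax (x_ge0^~ j) (x_sum1 j)) /maxx addrAC subrr add0r.
Qed.

Lemma sum_integral_f_Aset_ge :
  ((\sum_j pi j * (1 - maxx x j))%:E <=
   \sum_i \int[mu]_(t in half) (f (Aset x i t))%:E)%E.
Proof.
rewrite -integral_level_sum_gap -integral_sum; last 2 first.
- exact: measurable_itv.
- exact: integrable_f_Aset.
apply: le_integral => [|||t]; first exact: measurable_itv.
- apply: integrableB; [exact: measurable_itv | | exact: integrable_level_sum].
  apply: eq_integrable (integrable_level_sum _ false _ _) => [|t _]; first exact: measurable_itv.
  by rewrite /= sum_level_sum.
- by apply: integrable_sum => [|i _]; [exact: measurable_itv | exact: integrable_f_Aset].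
- by rewrite inE /= in_itv /= => /andP[t_ge0 _]; rewrite sumEFin -EFinB lee_fin level_sum_Aset_le.
Qed.
End polyhedron_vector.
End rounding.

Theorem lemma5 (R : realType) (V : finType) (f : {set V} -> R)
  (k : nat) (t : 'I_k -> V) (x : 'I_k -> V -> R) :
  (forall S, 0 <= f S) -> submodular f -> f finset.set0 = 0 ->
  injective t ->
  (forall i j, 0 <= x i j) ->
  (forall j, \sum_(i < k) x i j = 1) ->
  (forall i, x i (t i) = 1) ->
  (\sum_(i < k) \int[lebesgue_measure]_(theta in `[0%R, 2^-1%R]%classic)
       (f (Aset x i theta))%:E
   >= \int[lebesgue_measure]_(theta in `[0%R, 2^-1%R]%classic)
       (f (Bset x theta))%:E)%E.
Proof.
(* The terminals are irrelevant: the bound holds for every fractional assignment. *)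
move=> f_ge0 f_submod f_set0 _ x_ge0 x_sum1 _.
pose u j := 1 - maxx x j.
have [pi [pi_le pi_level excess_ge0]] := exists_level_tight_vector f_ge0 f_set0 f_submod u.
under eq_integral => theta _ do rewrite (pi_level true).
have u_ge0 j : 0 <= u j by rewrite subr_ge0 maxx_le1.
rewrite integral_level_sum ?invr_ge0 //.
apply: le_trans (sum_integral_f_Aset_ge f_ge0 f_set0 f_submod x_ge0 x_sum1 pi_le).
rewrite lee_fin -subr_ge0 -sumrB; under eq_bigr do rewrite -mulrBr.
exact: excess_ge0.
Qed.
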